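(* Let $G$ be a signed digraph with $n$ vertices and without positive cycles, and let $f$ be a Boolean network on $G$ having a fixed point. Then $f$ has a synchronizing word of length $n$.
   Context: A signed digraph on $V$ is $(V,E)$ with $E\subseteq V\times V\times\{-1,1\}$; cycles have no repeated vertices (a loop is a cycle) and their sign is the product of arc signs. A Boolean network (BN) is $f:\{0,1\}^V\to\{0,1\}^V$; its signed interaction digraph has a positive (negative) arc from $j$ to $i$ iff for some $x$ with $x_j=0$, $f_i(x+e_j)-f_i(x)$ is positive (negative). A BN on $G$ is one whose signed interaction digraph is $G$. $f^i(x)$ is $x$ with $x_i$ replaced by $f_i(x)$; $f^{i_1\cdots i_\ell}=f^{i_\ell}\circ\cdots\circ f^{i_1}$; $w$ is synchronizing if $f^w$ is constant. *)

From mathcomp Require Import all_boot.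
Set Implicit Arguments. Unset Strict Implicit. Unset Printing Implicit Defensive.

(* Signs: true = positive (+1), false = negative (-1). *)
(* A signed digraph on V is given by its arc set E ⊆ V × V × {-1,1},
   represented as a boolean relation: G j i s  <->  (j,i,s) ∈ E. *)
Definition sdigraph (V : finType) := V -> V -> bool -> bool.

(* Sign of a list of arc signs: their product, i.e. positive iff the
   number of negative signs is even. *)
Definition sign_prod (s : seq bool) : bool := ~~ odd (count negb s).

Definition is_cycle (V : finType) (G : sdigraph V) (c : seq V) (s : seq bool) : Prop :=
  [/\ 0 < size c, uniq c, size s = size c &
      forall (x0 : V) t, t < size c ->
        G (nth x0 c t) (nth x0 c (t.+1 %% size c)) (nth true s t)].

Definition no_positive_cycle (V : finType) (G : sdigraph V) : Prop :=
  forall c s, is_cycle G c s -> sign_prod s = false.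

Definition config (V : finType) := {ffun V -> bool}.
Definition BN (V : finType) := config V -> config V.

Definition setc (V : finType) (x : config V) (j : V) (b : bool) : config V :=
  [ffun k => if k == j then b else x k].

Definition interaction (V : finType) (f : BN V) : sdigraph V :=
  fun j i s => [exists x : config V,
    (x j == false) &&
    (if s then (f x i == false) && (f (setc x j true) i == true)
          else (f x i == true) && (f (setc x j true) i == false))].

Definition BN_on (V : finType) (f : BN V) (G : sdigraph V) : Prop :=
  forall j i s, interaction f j i s = G j i s.

Definition fupd (V : finType) (f : BN V) (i : V) (x : config V) : config V :=
  setc x i (f x i).

(* f^{i_1 ... i_l} = f^{i_l} o ... o f^{i_1} *)
Definition fword (V : finType) (f : BN V) (w : seq V) (x : config V) : config V :=
  foldl (fun y i => fupd f i y) x w.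

Definition synchronizing (V : finType) (f : BN V) (w : seq V) : Prop :=
  exists c : config V, forall x : config V, fword f w x = c.

Definition has_fixed_point (V : finType) (f : BN V) : Prop :=
  exists x : config V, f x = x.

(* Fix a fixed point x of f and say that a vertex i is determined by a set S
   of vertices if f_i(y) = x_i for every y that agrees with x on S.  If S is
   not all of V, some vertex outside S is determined by S.  Otherwise, every
   i outside S has a counterexample y; moving y back to x one coordinate at a
   time exhibits an arc j -> i with j outside S whose sign is + exactly when
   x_j = x_i.  Following such arcs backwards closes a cycle, and the product
   of the agreements x_j = x_i around a cycle telescopes to +, contradicting
   the absence of positive cycles.  Updating determined vertices one after
   another therefore yields a word of length n after which every
   configuration equals x. *)

From mathcomp Require Import all_boot.

Set Implicit Arguments.
Unset Strict Implicit.
Unset Printing Implicit Defensive.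

Lemma sign_prod_pairmap_eq (T : Type) (g : T -> bool) (a : T) (l : seq T) :
  sign_prod (pairmap (fun u v => g u == g v) a l) = (g a == g (last a l)).
Proof.
rewrite /sign_prod; elim: l a => [|b l IHl] a //=; rewrite ?eqxx //.
rewrite oddD oddb; have := IHl b.
by case: (g a); case: (g b); case: (g (last b l)); case: odd.
Qed.

Lemma nth_rcons_rot (T : Type) (x0 a : T) (l : seq T) t : t <= size l ->
  nth x0 (rcons l a) t = nth x0 (a :: l) (t.+1 %% (size l).+1).
Proof.
rewrite leq_eqVlt nth_rcons => /predU1P[->|lt_t]; first by rewrite ltnn eqxx modnn.
by rewrite lt_t modn_small.
Qed.

Lemma consistent_cycle_positive (V : finType) (G : sdigraph V) (g : V -> bool) c :
  0 < size c -> uniq c -> cycle (fun j i => G j i (g j == g i)) c ->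
  exists s, is_cycle G c s /\ sign_prod s.
Proof.
case: c => [//|a l] _ uniq_c arcs.
pose s := pairmap (fun u v => g u == g v) a (rcons l a).
exists s; split; last by rewrite sign_prod_pairmap_eq last_rcons.
split=> //; first by rewrite size_pairmap size_rcons.
move=> x0 t lt_t; have := pathP x0 arcs t; rewrite size_rcons => /(_ lt_t).
by rewrite (nth_pairmap x0) ?size_rcons // nth_rcons_rot // -rcons_cons nth_rcons lt_t.
Qed.

Lemma exists_iter_fcycle (T : finType) (p : T -> T) (x : T) :
  exists m, fcycle p (orbit p (iter m p x)).
Proof.
have /trajectP[m lt_m_order iter_order_m] := looping_order p x.
exists m; apply/(orbitPcycle 0 3); exists (order p x - m).-1.
by rewrite prednK ?subn_gt0 // -iterD subnK ?(ltnW lt_m_order).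
Qed.

Lemma exists_cycle (T : finType) (R : rel T) (U : pred T) (i0 : T) :
  i0 \in U -> (forall i, i \in U -> exists2 j, j \in U & R j i) ->
  exists c, [/\ 0 < size c, uniq c & cycle R c].
Proof.
move=> U_i0 predU.
pose p i := odflt i0 [pick j in U | R j i].
have p_in_U i : p i \in U by rewrite /p; case: pickP => // j /andP[].
have p_pred i : i \in U -> R (p i) i.
  move=> /predU[j U_j R_ji]; rewrite /p; case: pickP => [k /andP[] //|none].
  by have := none j; rewrite /= U_j R_ji.
have iter_in_U k : iter k p i0 \in U by case: k => [|k] //=; apply: p_in_U.
have [m p_cycle] := exists_iter_fcycle p i0.
exists (rev (orbit p (iter m p i0))).
rewrite size_rev size_orbit order_gt0 rev_uniq orbit_uniq rev_cycle; split=> //.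
apply: (sub_in_cycle (P := U)) p_cycle; last first.
  by apply/allP=> _ /trajectP[k _ ->]; rewrite -iterD; apply: iter_in_U.
by move=> u v U_u _ /eqP <-; apply: p_pred.
Qed.

Section BooleanNetwork.

Variables (V : finType) (f : BN V).

Lemma setcE (x : config V) j b k : setc x j b k = if k == j then b else x k.
Proof. by rewrite ffunE. Qed.

Lemma setc_id (x : config V) j : setc x j (x j) = x.
Proof. by apply/ffunP=> k; rewrite setcE; case: eqP => [->|]. Qed.

Lemma setc_setc (x : config V) j b c : setc (setc x j b) j c = setc x j c.
Proof. by apply/ffunP=> k; rewrite !setcE; case: eqP. Qed.

Lemma interaction_flip (x : config V) j i :
  f (setc x j (~~ x j)) i != f x i -> interaction f j i (x j == f x i).
Proof.
move=> flip_changes_fi; apply/existsP; case x_j: (x j) in flip_changes_fi *.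
- exists (setc x j false).
  have -> : setc (setc x j false) j true = x by rewrite setc_setc -x_j setc_id.
  rewrite setcE eqxx /=; move: flip_changes_fi.
  by case: (f x i); case: (f (setc x j false) i).
- exists x; rewrite x_j /=; move: flip_changes_fi.
  by case: (f x i); case: (f (setc x j true) i).
Qed.

Lemma exists_interaction_between (x y : config V) i : f y i != f x i ->
  exists2 j, x j != y j & interaction f j i (x j == f x i).
Proof.
have [n] := ubnP #|[set j | x j != y j]|; elim: n y => // n IHn y lt_diff_n fy_fx.
have [j0 /= diff_j0 | same] := pickP [pred j | x j != y j]; last first.
  have y_x : y = x by apply/ffunP=> k; apply/esym/eqP/negbFE/same.
  by rewrite y_x eqxx in fy_fx.
pose y' := setc y j0 (x j0).
have diff_y' : [set j | x j != y' j] = [set j | x j != y j] :\ j0.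
  by apply/setP=> k; rewrite !inE setcE; case: (k =P j0) => [->|]; rewrite ?eqxx.
have [fy'_fx | /negbNE/eqP fy'_fx] := boolP (f y' i != f x i).
  have lt_diff'_n : #|[set j | x j != y' j]| < n.
    by move: lt_diff_n; rewrite (cardsD1 j0) inE diff_j0 diff_y' add1n ltnS.
  have [j diff_j arc_ji] := IHn y' lt_diff'_n fy'_fx.
  by exists j; move: diff_j; rewrite setcE; case: (j =P j0) => [->|]; rewrite ?eqxx.
have y_flip : y = setc y' j0 (~~ y' j0).
  rewrite setc_setc setcE eqxx (_ : ~~ x j0 = y j0) ?setc_id //.
  by move: diff_j0 => /=; case: (x j0); case: (y j0).
exists j0 => //; have := @interaction_flip y' j0 i.
by rewrite -y_flip fy'_fx setcE eqxx => /(_ fy_fx).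
Qed.

Definition determined_by (x : config V) (S : {set V}) (i : V) : bool :=
  [forall y : config V, [forall j in S, y j == x j] ==> (f y i == x i)].

Definition forces (w : seq V) (x : config V) : Prop :=
  forall y j, j \in w -> fword f w y j = x j.

Lemma forces_rcons (x : config V) w i :
  forces w x -> determined_by x [set j in w] i -> forces (rcons w i) x.
Proof.
move=> w_forces /forallP i_det y j.
rewrite mem_rcons inE /fword foldl_rcons -/(fword f w y) /fupd setcE.
case: (j =P i) => [-> _ | _ /= j_w]; last exact: w_forces.
apply/eqP/(implyP (i_det _)); apply/forall_inP=> k.
by rewrite inE => /w_forces ->.
Qed.

Section ForcingWord.

Variable G : sdigraph V.
Hypotheses (no_pos : no_positive_cycle G) (f_on_G : BN_on f G).
Variable x : config V.
Hypothesis x_fixed : f x = x.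

Lemma undetermined_predecessor (S : {set V}) i :
  ~~ determined_by x S i -> exists2 j, j \notin S & G j i (x j == x i).
Proof.
case/forallPn=> y; rewrite negb_imply => /andP[/forall_inP y_agrees fy_x].
have [j diff_j arc_ji] : exists2 j, x j != y j & interaction f j i (x j == f x i).
  by apply: exists_interaction_between; rewrite x_fixed.
exists j; first by apply: contra diff_j => /y_agrees/eqP ->.
by rewrite -f_on_G; move: arc_ji; rewrite x_fixed.
Qed.

Lemma exists_determined (S : {set V}) i0 :
  i0 \notin S -> exists2 i, i \notin S & determined_by x S i.
Proof.
move=> S'i0.
have [i /andP[S'i i_det] | none] := pickP [pred i | (i \notin S) && determined_by x S i].
  by exists i.
have [c [c_gt0 uniq_c arcs]] :
    exists c, [/\ 0 < size c, uniq c & cycle (fun j i => G j i (x j == x i)) c].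
  apply: (@exists_cycle _ _ [predC S] i0); first by rewrite inE.
  move=> i; rewrite inE => S'i; apply: undetermined_predecessor.
  by have := none i; rewrite /= S'i => /negbT.
have [s [s_cycle s_pos]] := consistent_cycle_positive c_gt0 uniq_c arcs.
by rewrite (no_pos s_cycle) in s_pos.
Qed.

Lemma exists_forcing_word k :
  k <= #|V| -> exists w, [/\ size w = k, uniq w & forces w x].
Proof.
elim: k => [|k IHk] lt_k_V; first by exists [::].
have [w [size_w uniq_w w_forces]] := IHk (ltnW lt_k_V).
have /card_gt0P[i0 w'i0] : 0 < #|[predC w]|.
  have card_w : #|w| + #|[predC w]| = #|V| := cardC _.
  by move: lt_k_V; rewrite -card_w (card_uniqP uniq_w) size_w -{1}(addn0 k) ltn_add2l.
have [i w'i i_det] : exists2 i, i \notin [set j in w] & determined_by x [set j in w] i.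
  by apply: (@exists_determined _ i0); rewrite inE.
exists (rcons w i); split; first by rewrite size_rcons size_w.
  by rewrite rcons_uniq uniq_w andbT; rewrite inE in w'i.
exact: forces_rcons.
Qed.

End ForcingWord.

End BooleanNetwork.

Theorem proposition9 (V : finType) (G : sdigraph V) (f : BN V) :
  no_positive_cycle G -> BN_on f G -> has_fixed_point f ->
  exists w : seq V, size w = #|V| /\ synchronizing f w.
Proof.
move=> no_pos f_on_G [x x_fixed].
have [w [size_w uniq_w w_forces]] := exists_forcing_word no_pos f_on_G x_fixed (leqnn #|V|).
have w_full : w =i V.
  by apply/subset_cardP; rewrite ?(card_uniqP uniq_w) ?size_w ?subset_predT.
by exists w; split=> //; exists x => y; apply/ffunP=> j; apply: w_forces; rewrite w_full.
Qed.
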